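(* Let $n\ge 1$, let $C_u(v_1),\ldots,C_u(v_n)>0$ and $R_1,\ldots,R_n>0$, and run the algorithm described in the context on these inputs. For every $\alpha$ with $1\le\alpha\le n$: if $\sum_{i=1}^n U_i[\alpha] \geq (n-2)R_\alpha$, then $\sum_{i=1}^n r_{\alpha,i} = R_\alpha$ at the end of iteration $\alpha$ of the outer loop.
   Context: Sub-stream rate assigning algorithm. Input: $n$, uplink capacities $C_u(v_1),\ldots,C_u(v_n)$ and rates $R_1,\ldots,R_n$. Initialize $r_{i,j}:=0$ for all $1\le i,j\le n$ and $U_i := C_u(v_i)-R_i$ for $1\le i\le n$. Outer loop: for $i=1$ to $n$: set $R'_i := R_i$; inner loop: for $j=1$ to $n$: if $(n-2)R'_i > U_j$ then set $r_{i,j} := U_j/(n-2)$, else set $r_{i,j} := R'_i$; then set $U_j := U_j-(n-2)r_{i,j}$ and $R'_i := R'_i - r_{i,j}$; if $R'_i = 0$, exit the inner loop. Output all $r_{i,j}$. Notation: $U_i[\alpha]$ denotes the value of the variable $U_i$ at the start of iteration $\alpha$ of the outer loop. *)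

From mathcomp Require Import all_boot all_order all_algebra.
Set Implicit Arguments. Unset Strict Implicit. Unset Printing Implicit Defensive.
Import Order.TTheory GRing.Theory Num.Theory.
Local Open Scope ring_scope.

Section Algo.
Variables (R : realFieldType) (n : nat).

(* Peers are indexed by 'I_n (peer k : 'I_n is v_{k+1} in the paper). *)

Record alg_state := AlgState { st_U : 'I_n -> R ; st_r : 'I_n -> 'I_n -> R }.

(* The constant (n-2), computed in R (so it is -1 when n = 1). *)
Definition nm2 : R := n%:R - 2.

Record inner_state := InnerState
  { in_U : 'I_n -> R ; in_r : 'I_n -> 'I_n -> R ; in_R' : R ; in_done : bool }.

Definition inner_step (i : 'I_n) (s : inner_state) (j : 'I_n) : inner_state :=
  if in_done s then s else
  let U := in_U s in
  let R' := in_R' s in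
  let rij := if nm2 * R' > U j then U j / nm2 else R' in
  let U' := fun k => if k == j then U j - nm2 * rij else U k in
  let r' := fun a b => if (a == i) && (b == j) then rij else in_r s a b in
  let R'' := R' - rij in
  InnerState U' r' R'' (R'' == 0).

(* One iteration i of the outer loop: set R'_i := R_i, run the inner loop
   for j = 1..n (exiting as soon as R'_i = 0). *)
Definition outer_step (Rs : 'I_n -> R) (s : alg_state) (i : 'I_n) : alg_state :=
  let t := foldl (inner_step i) (InnerState (st_U s) (st_r s) (Rs i) false)
                 (enum 'I_n) in
  AlgState (in_U t) (in_r t).

Definition init_state (Cu Rs : 'I_n -> R) : alg_state :=
  AlgState (fun i => Cu i - Rs i) (fun _ _ => 0).

(* State after the first k iterations of the outer loop.  Thus, for the
   0-based index a : 'I_n, [state_after Cu Rs a] is the state at the start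
   of (1-based) iteration a+1, and [state_after Cu Rs a.+1] the state at its end. *)
Definition state_after (Cu Rs : 'I_n -> R) (k : nat) : alg_state :=
  foldl (outer_step Rs) (init_state Cu Rs) (take k (enum 'I_n)).

End Algo.

From mathcomp Require Import all_boot all_order all_algebra.
From mathcomp Require Import ring.
Import Order.TTheory GRing.Theory Num.Theory.
Local Open Scope ring_scope.

(* During outer iteration a, the row sum of r_a plus the residual R'_a is
   invariant and starts at R_a, since row a is still zero.  The hypothesis
   starts the invariant (n-2) R'_a <= sum of the U_j not yet visited: a capped
   step at j assigns U_j/(n-2), which lowers (n-2) R'_a by at least U_j.  At the
   last peer the invariant rules out the capped branch, so the whole residual
   is assigned there at the latest and R'_a ends at 0. *)

Section InnerLoop.
Variables (R : realFieldType) (n : nat) (i : 'I_n).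

Implicit Types (s : inner_state R n) (l : seq 'I_n).

Lemma foldl_inner_step_done l s : in_done s -> foldl (inner_step i) s l = s.
Proof. by move=> done_s; elim: l => //= j l IHl; rewrite /inner_step done_s. Qed.

Lemma inner_step_U_other s j k : k != j -> in_U (inner_step i s j) k = in_U s k.
Proof. by move=> /negbTE kj; rewrite /inner_step; case: in_done => //=; rewrite kj. Qed.

Lemma inner_step_r_other s j a b :
  ~~ ((a == i) && (b == j)) -> in_r (inner_step i s j) a b = in_r s a b.
Proof. by move=> /negbTE ab; rewrite /inner_step; case: in_done => //=; rewrite ab. Qed.

Lemma foldl_inner_step_r_other l s a b :
  a != i -> in_r (foldl (inner_step i) s l) a b = in_r s a b.
Proof.
move=> ai; elim: l s => //= j l IHl s.
by rewrite IHl inner_step_r_other // (negbTE ai).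
Qed.

Lemma inner_step_row_sum s j : in_r s i j = 0 ->
  \sum_(k < n) in_r (inner_step i s j) i k + in_R' (inner_step i s j)
  = \sum_(k < n) in_r s i k + in_R' s.
Proof.
move=> rij0; rewrite /inner_step; case: in_done => //=.
rewrite [in RHS](bigD1 j) //= rij0 add0r (bigD1 j) //= !eqxx /=.
by rewrite (eq_bigr (fun k => in_r s i k)) => [|k /negbTE -> //]; ring.
Qed.

Lemma foldl_inner_step_row_sum l s : uniq l -> {in l, forall k, in_r s i k = 0} ->
  \sum_(k < n) in_r (foldl (inner_step i) s l) i k + in_R' (foldl (inner_step i) s l)
  = \sum_(k < n) in_r s i k + in_R' s.
Proof.
elim: l s => //= j l IHl s /andP[jNl uniq_l] row0.
rewrite IHl // ?inner_step_row_sum ?row0 ?mem_head // => k kl.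
rewrite inner_step_r_other ?row0 ?inE ?kl ?orbT //.
by rewrite eqxx /=; apply: contraNN jNl => /eqP <-.
Qed.

Lemma inner_step_uncapped s j : ~~ in_done s -> ~~ (in_U s j < nm2 R n * in_R' s) ->
  in_R' (inner_step i s j) = 0 /\ in_done (inner_step i s j).
Proof.
by move=> /negbTE done_s /negbTE uncapped; rewrite /inner_step done_s uncapped /= subrr.
Qed.

(* When n = 2 the capped branch assigns U_j / 0 = 0; it is then only taken for
   U_j < 0, so the bound below still holds. *)
Lemma inner_step_capped s j : ~~ in_done s -> in_U s j < nm2 R n * in_R' s ->
  nm2 R n * in_R' (inner_step i s j) <= nm2 R n * in_R' s - in_U s j.
Proof.
move=> /negbTE done_s capped; rewrite /inner_step done_s capped /= mulrBr lerD2l lerN2.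
have [nm2_0 | nm2_neq0] := eqVneq (nm2 R n) 0; last by rewrite mulrC divfK.
by move: capped; rewrite nm2_0 !mul0r => /ltW.
Qed.

Lemma foldl_inner_step_residual j l s : uniq (j :: l) ->
  (in_done s -> in_R' s = 0) ->
  (~~ in_done s -> nm2 R n * in_R' s <= \sum_(k <- j :: l) in_U s k) ->
  in_R' (foldl (inner_step i) s (j :: l)) = 0.
Proof.
elim: l j s => [|j' l IHl] j s uniq_jl done_s budget.
  have [done_s1 | not_done] := boolP (in_done s).
    by rewrite /= /inner_step done_s1 done_s.
  have uncapped : ~~ (in_U s j < nm2 R n * in_R' s).
    by rewrite -leNgt -(big_seq1 +%R j (in_U s)) budget.
  by have [] := inner_step_uncapped s j not_done uncapped.
have [done_s1 | not_done] := boolP (in_done s).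
  by rewrite foldl_inner_step_done ?done_s.
case/andP: uniq_jl => jNl uniq_l.
have [uncapped | capped] := leP (nm2 R n * in_R' s) (in_U s j).
  rewrite leNgt in uncapped.
  have [R'0 done'] := inner_step_uncapped s j not_done uncapped.
  change (in_R' (foldl (inner_step i) (inner_step i s j) (j' :: l)) = 0).
  by rewrite foldl_inner_step_done.
apply: IHl => // [done' | _].
  by move: done'; rewrite /inner_step (negbTE not_done) => /eqP.
apply: le_trans (inner_step_capped s j not_done capped) _.
rewrite lerBlDl; apply: le_trans (budget not_done) _.
rewrite big_cons lerD2l [X in _ <= X](eq_big_seq (in_U s)) // => k kl.
by rewrite inner_step_U_other //; apply: contraNneq jNl => <-.
Qed.

End InnerLoop.

Section OuterLoop.
Variables (R : realFieldType) (n : nat) (Cu Rs : 'I_n -> R).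

Lemma foldl_outer_step_r_notin l (s : alg_state R n) a b :
  a \notin l -> st_r (foldl (outer_step Rs) s l) a b = st_r s a b.
Proof.
elim: l s => //= i l IHl s; rewrite inE negb_or => /andP[ai aNl].
by rewrite IHl //= foldl_inner_step_r_other.
Qed.

Lemma state_after_succ (a : 'I_n) :
  state_after Cu Rs a.+1 = outer_step Rs (state_after Cu Rs a) a.
Proof.
by rewrite /state_after (take_nth a) ?size_enum_ord // foldl_rcons nth_ord_enum.
Qed.

Lemma state_after_row_eq0 (a : 'I_n) b : st_r (state_after Cu Rs a) a b = 0.
Proof.
by rewrite foldl_outer_step_r_notin // in_take ?mem_enum // index_enum_ord ltnn.
Qed.

End OuterLoop.

Theorem propositionB1 (R : realFieldType) (n : nat) (Cu Rs : 'I_n -> R) :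
  (1 <= n)%N ->
  (forall i, 0 < Cu i) ->
  (forall i, 0 < Rs i) ->
  forall a : 'I_n,
    \sum_(i < n) st_U (state_after Cu Rs a) i >= nm2 R n * Rs a ->
    \sum_(i < n) st_r (state_after Cu Rs a.+1) a i = Rs a.
Proof.
move=> _ _ _ a budget; rewrite state_after_succ /outer_step /=.
set s := InnerState _ _ _ _.
have row0 k : in_r s a k = 0 by apply: state_after_row_eq0.
have := @foldl_inner_step_row_sum R n a _ s (enum_uniq 'I_n) (fun k _ => row0 k).
have -> : in_R' (foldl (inner_step a) s (enum 'I_n)) = 0.
  case E: (enum 'I_n) => [|j l]; first by have := mem_enum 'I_n a; rewrite E.
  by apply: foldl_inner_step_residual => // [|_]; rewrite -E ?enum_uniq ?big_enum.
by rewrite addr0 => ->; rewrite big1 ?add0r // => k _; apply: row0.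
Qed.
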